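(* Let $d\ge 0$ be an integer and let $G$ be a graph with $n\ge 2$ vertices and $\mathrm{tww}(G)\le d$. Then there exist disjoint sets $X,Y\subseteq V(G)$ with $|X|\ge n/(d+4)$ and $|Y|\ge n/(d+4)$ such that either every vertex of $X$ is adjacent to every vertex of $Y$, or no vertex of $X$ is adjacent to any vertex of $Y$. (That is, the class of graphs of twin-width at most $d$ has the strong Erdős–Hajnal property with $\varepsilon=1/(d+4)$.)
   Context: A trigraph $H$ consists of a vertex set $V(H)$ and two disjoint sets of unordered pairs of distinct vertices: black edges $E(H)$ and red edges $R(H)$. Two vertices are adjacent (neighbors) if they are joined by a black or a red edge. The red graph of $H$ is the graph $(V(H),R(H))$; $H$ is a $d$-trigraph if its red graph has maximum degree at most $d$. A graph is a trigraph with no red edges. Contracting two distinct vertices $u,v$ of a trigraph $H$ yields the trigraph obtained by deleting $u$ and $v$ and adding a new vertex $z$ such that, for every other vertex $x$: $zx$ is a black edge if both $ux$ and $vx$ are black edges; $zx$ is not an edge if $x$ is adjacent to neither $u$ nor $v$; and $zx$ is a red edge otherwise. All edges not incident to $u$ or $v$ are unchanged. A $d$-sequence of an $n$-vertex graph $G$ is a sequence of $d$-trigraphs $G=G_n,G_{n-1},\dots,G_1$ such that $G_1$ has a single vertex and each $G_{i-1}$ is obtained from $G_i$ by one contraction (so $G_i$ has $i$ vertices). The twin-width $\mathrm{tww}(G)$ of $G$ is the minimum $d$ such that $G$ admits a $d$-sequence. *)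

From mathcomp Require Import all_boot.
Set Implicit Arguments. Unset Strict Implicit. Unset Printing Implicit Defensive.

(* A trigraph whose vertices are named by elements of a finite type T:
   vertex set [tv], black edges [tb], red edges [tr] (relations are only
   meaningful between distinct vertices of [tv]). *)
Record trigraph (T : finType) := Trigraph {
  tv : {set T};
  tb : rel T;
  tr : rel T }.

Section Trigraphs.
Variable T : finType.

Definition tadj (H : trigraph T) (x y : T) : bool := tb H x y || tr H x y.

Definition red_deg (H : trigraph T) (x : T) : nat :=
  #|[set y in tv H | (y != x) && tr H x y]|.

Definition is_dtrigraph (d : nat) (H : trigraph T) : Prop :=
  forall x, x \in tv H -> red_deg H x <= d.

(* Contraction of u and v: u and v are deleted and a new vertex z is added;
   we name the new vertex z by the (now free) name u. *)
Definition new_black (H : trigraph T) (u v : T) (y : T) : bool :=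
  (y != u) && (y != v) && tb H u y && tb H v y.
Definition new_red (H : trigraph T) (u v : T) (y : T) : bool :=
  (y != u) && (y != v) && (tadj H u y || tadj H v y)
  && ~~ (tb H u y && tb H v y).

Definition contract (H : trigraph T) (u v : T) : trigraph T :=
  {| tv := tv H :\ v;
     tb := fun x y =>
       if x == u then new_black H u v y
       else if y == u then new_black H u v x
       else tb H x y;
     tr := fun x y =>
       if x == u then new_red H u v y
       else if y == u then new_red H u v x
       else tr H x y |}.

Definition graph_trigraph (e : rel T) : trigraph T :=
  {| tv := [set: T]; tb := e; tr := fun _ _ => false |}.

(* G has a d-sequence: G = G_n, G_{n-1}, ..., G_1 (here indexed by
   f 0 = G_n, ..., f (n-1) = G_1), all d-trigraphs, each obtained from
   the previous one by one contraction, the last with a single vertex. *)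
Definition has_dseq (e : rel T) (d : nat) : Prop :=
  exists f : nat -> trigraph T,
    [/\ f 0 = graph_trigraph e,
        (forall i, i < #|T|.-1 ->
           exists u v, [/\ u \in tv (f i), v \in tv (f i), u != v &
                           f i.+1 = contract (f i) u v]),
        (forall i, i < #|T| -> is_dtrigraph d (f i)) &
        #|tv (f #|T|.-1)| = 1].

Definition tww_le (e : rel T) (d : nat) : Prop :=
  exists d', d' <= d /\ has_dseq e d'.

End Trigraphs.

From mathcomp Require Import all_boot.
From mathcomp Require Import zify.
Set Implicit Arguments. Unset Strict Implicit.

(* Follow a d-sequence G = G_n, ..., G_1 and keep track of the partition of
   V(G) into the parts that have been contracted into the current vertices;
   it is encoded by a map [p] sending each original vertex to its current
   vertex.  The partition "represents" the trigraph: between two parts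
   joined by a black edge all pairs are edges of G, and between two
   non-adjacent parts no pair is.  Contracting u and v merges two parts and
   preserves this invariant ([represents_contract]).

   Initially all parts are singletons, hence small (less than n/(d+4)
   vertices); at the end there is a single part of size n.  At the first
   contraction creating a large part P, P is the union of two small parts,
   its at most d red neighbours are small parts, and every remaining vertex
   lies in a part that is either black-joined or non-adjacent to P.  A count
   ([homogeneous_split]) shows that one of these two classes of remaining
   vertices has at least n/(d+4) elements, giving the pair (P, Y).  Graphs
   with n <= d+4 are handled directly by two singletons. *)

Lemma card_preimset_sum (aT rT : finType) (p : aT -> rT) (S : {set rT}) :
  #|[set x | p x \in S]| = \sum_(b in S) #|[set x | p x == b]|.
Proof.
rewrite -sum1_card (partition_big p (mem S)) /=; last by move=> x; rewrite inE.
apply: eq_bigr => b b_in_S; rewrite -sum1_card; apply: eq_bigl => x.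
by rewrite !inE; apply/andP/eqP => [[_ /eqP]|->].
Qed.

(* The numerical heart of the argument: if the large part P is at most
   twice a small part, the red region R is at most d small parts, and the
   rest of the vertices is split into two classes of sizes w1 and w0, then
   one of the two classes contains at least n/(d+4) vertices. *)
Lemma homogeneous_split (d n p r w1 w0 : nat) :
  (d + 4) * p + 2 <= 2 * n ->
  (d + 4) * r <= d * n.-1 ->
  n <= w1 + w0 + p + r ->
  n <= (d + 4) * w1 \/ n <= (d + 4) * w0.
Proof.
move=> hp hr hn; have := leq_mul (leqnn (d + 4)) hn; rewrite !mulnDr => hn'.
case: (leqP n ((d + 4) * w1)) => c1; first by left.
case: (leqP n ((d + 4) * w0)) => c2; first by right.
exfalso; nia.
Qed.

Lemma is_dtrigraph_le (T : finType) (d d' : nat) (H : trigraph T) :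
  d' <= d -> is_dtrigraph d' H -> is_dtrigraph d H.
Proof. by move=> le_dd' Hd x hx; apply: leq_trans (Hd x hx) le_dd'. Qed.

Section Partitions.
Variable T : finType.
Variable e : rel T.
Hypothesis e_sym : symmetric e.

Local Notation n := #|T|.

Definition part (p : T -> T) (a : T) : {set T} := [set x | p x == a].

Definition homogeneous_pair (d : nat) : Prop := exists X Y : {set T},
  [/\ [disjoint X & Y],
      n <= (d + 4) * #|X|,
      n <= (d + 4) * #|Y| &
      (forall x y, x \in X -> y \in Y -> e x y) \/
      (forall x y, x \in X -> y \in Y -> ~~ e x y)].

Definition all_small (d : nat) (p : T -> T) : bool :=
  [forall a, (d + 4) * #|part p a| < n].

Definition represents (H : trigraph T) (p : T -> T) : Prop :=
  [/\ forall x, p x \in tv H,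
      forall x y, p x != p y -> tb H (p x) (p y) -> e x y &
      forall x y, p x != p y -> ~~ tadj H (p x) (p y) -> ~~ e x y].

Lemma represents_graph : represents (graph_trigraph e) id.
Proof. by split=> [x|//|x y _]; rewrite /tadj ?inE ?orbF. Qed.

(* Contracting u and v (the new vertex is named u) merges the parts. *)
Definition merge (p : T -> T) (u v : T) (x : T) : T :=
  if p x == v then u else p x.

Lemma merge_other (p : T -> T) (u v x : T) : merge p u v x != u ->
  [/\ merge p u v x = p x, p x != v & p x != u].
Proof. by rewrite /merge; case: ifP => [_|/negbT xv xu]; rewrite ?eqxx. Qed.

Lemma merge_u (p : T -> T) (u v x : T) :
  merge p u v x = u -> p x = u \/ p x = v.
Proof. by rewrite /merge; case: ifP => [/eqP|]; auto. Qed.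

Lemma part_merge_u (p : T -> T) (u v : T) :
  part (merge p u v) u = part p u :|: part p v.
Proof.
by apply/setP => x; rewrite !inE /merge; case: ifP => hv; rewrite ?eqxx ?orbT ?orbF.
Qed.

(* The parts other than the merged one are unchanged (the part of v is
   emptied), so they stay small. *)
Lemma merge_small (d : nat) (p : T -> T) (u v b : T) :
  0 < n -> all_small d p -> b != u -> (d + 4) * #|part (merge p u v) b| < n.
Proof.
move=> n_gt0 small_p bu; case: (eqVneq b v) => [b_eq_v|bv]; first subst b.
  suff -> : part (merge p u v) v = set0 by rewrite cards0 muln0.
  apply/setP => x; rewrite !inE /merge.
  by case: ifP => // _; rewrite eq_sym (negbTE bu).
suff -> : part (merge p u v) b = part p b by apply: (forallP small_p).
apply/setP => x; rewrite !inE /merge; case: ifP => [/eqP ->|//].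
by rewrite ![_ == b]eq_sym (negbTE bu) (negbTE bv).
Qed.

(* Between the merged part and another part, the new edge is black exactly
   when both old edges were black, and absent when both were absent. *)
Lemma represents_contract_merged (H : trigraph T) (p : T -> T) (u v x y : T) :
  represents H p -> u != v ->
  merge p u v x = u -> merge p u v y != u ->
  (tb (contract H u v) u (merge p u v y) -> e x y) /\
  (~~ tadj (contract H u v) u (merge p u v y) -> ~~ e x y).
Proof.
move=> [_ Hb Hn] uv hx hy; case: (merge_other hy) => -> yv yu.
rewrite /tadj /= eqxx /new_black /new_red yv yu /=.
have hx' : p x != p y by case: (merge_u hx) => ->; rewrite eq_sym.
split=> [/andP[ub vb]|].
  by case: (merge_u hx) => px; apply: Hb; rewrite // px.
case: (boolP (tb H u (p y) && tb H v (p y))) => [//|_].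
rewrite /= andbT negb_or => /andP[nu nv].
by case: (merge_u hx) => px; apply: Hn; rewrite // px.
Qed.

Lemma contract_sym_u (H : trigraph T) (u v a : T) : a != u ->
  tb (contract H u v) a u = tb (contract H u v) u a /\
  tadj (contract H u v) a u = tadj (contract H u v) u a.
Proof. by move=> au; rewrite /tadj /= eqxx (negbTE au). Qed.

Lemma represents_contract (H : trigraph T) (p : T -> T) (u v : T) :
  represents H p -> u \in tv H -> u != v ->
  represents (contract H u v) (merge p u v).
Proof.
move=> Hp Hu uv; have [Hin Hb Hn] := Hp.
have merged := represents_contract_merged Hp uv.
have unmerged x y : merge p u v x != u -> merge p u v y != u ->
    tb (contract H u v) (merge p u v x) (merge p u v y) = tb H (p x) (p y) /\
    tadj (contract H u v) (merge p u v x) (merge p u v y) = tadj H (p x) (p y).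
  move=> hx hy; case: (merge_other hx) => -> _ /negbTE xu.
  by case: (merge_other hy) => -> _ /negbTE yu; rewrite /tadj /= xu yu.
split.
- move=> x; rewrite /merge !inE; case: ifP => hv; first by rewrite Hu andbT.
  by rewrite hv Hin.
- move=> x y xy; case: (eqVneq (merge p u v x) u) => [hx|hx].
    by rewrite hx; apply: (merged x y hx _).1; move: xy; rewrite hx eq_sym.
  case: (eqVneq (merge p u v y) u) => [hy|hy].
    by rewrite hy (contract_sym_u _ _ hx).1 e_sym; apply: (merged y x hy hx).1.
  have [-> _] := unmerged x y hx hy.
  by apply: Hb; case: (merge_other hx) => <- _ _; case: (merge_other hy) => <-.
- move=> x y xy; case: (eqVneq (merge p u v x) u) => [hx|hx].
    by rewrite hx; apply: (merged x y hx _).2; move: xy; rewrite hx eq_sym.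
  case: (eqVneq (merge p u v y) u) => [hy|hy].
    by rewrite hy (contract_sym_u _ _ hx).2 e_sym; apply: (merged y x hy hx).2.
  have [_ ->] := unmerged x y hx hy.
  by apply: Hn; case: (merge_other hx) => <- _ _; case: (merge_other hy) => <-.
Qed.

(* The key step: once a part P = part q u is large but at most twice a
   small part, P together with one of the classes of vertices outside P and
   outside the (at most d, small) red neighbouring parts forms the pair. *)
Lemma homogeneous_pair_of_large_part (d : nat) (H : trigraph T) (q : T -> T)
    (u : T) :
  represents H q -> u \in tv H -> red_deg H u <= d ->
  n <= (d + 4) * #|part q u| -> (d + 4) * #|part q u| + 2 <= 2 * n ->
  (forall b, b != u -> (d + 4) * #|part q b| < n) ->
  homogeneous_pair d.
Proof.
move=> [Hin Hb Hn] Hu Hdeg P_large P_bound small_b.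
set P := part q u in P_large P_bound.
set red_nbrs := [set y in tv H | (y != u) && tr H u y].
set R := [set x | q x \in red_nbrs].
have R_bound : (d + 4) * #|R| <= d * n.-1.
  have n_gt0 : 0 < n by apply/card_gt0P; exists u.
  rewrite card_preimset_sum big_distrr /=.
  apply: (@leq_trans (\sum_(b in red_nbrs) n.-1)).
    apply: leq_sum => b; rewrite inE => /andP[_ /andP[bu _]].
    by rewrite -ltnS prednK // small_b.
  by rewrite sum_nat_const leq_mul2r Hdeg orbT.
set W := ~: (P :|: R).
set B := [set y | tb H u (q y)].
have W_outside y : y \in W -> q y != u /\ ~~ tr H u (q y).
  rewrite in_setC in_setU negb_or => /andP[yP yR].
  have yu : q y != u by move: yP; rewrite inE.
  by split=> //; apply: contra yR => red; rewrite !inE Hin yu red.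
have P_disjoint (Y : {set T}) : Y \subset W -> [disjoint P & Y].
  move=> YW; rewrite disjoint_subset; apply/subsetP => x xP; rewrite inE.
  by apply/negP => /(subsetP YW); rewrite in_setC in_setU xP.
have qP x : x \in P -> q x = u by rewrite inE => /eqP.
have [large_W1 | large_W0] : n <= (d + 4) * #|W :&: B| \/
                            n <= (d + 4) * #|W :\: B|.
  apply: (homogeneous_split P_bound R_bound).
  have := cardsC (P :|: R); have := cardsID B W; have := leq_card_setU P R.
  rewrite -/W => [[PR _]]; lia.
- exists P, (W :&: B); split=> //; first by apply/P_disjoint/subsetIl.
  left=> x y xP /setIP[yW yB]; have [yu _] := W_outside y yW.
  by apply: Hb; rewrite qP // ?(eq_sym u) //; move: yB; rewrite inE.
- exists P, (W :\: B); split=> //; first by apply/P_disjoint/subsetDl.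
  right=> x y xP /setDP[yW yB]; have [yu not_red] := W_outside y yW.
  apply: Hn; rewrite qP // ?(eq_sym u) //.
  by rewrite /tadj negb_or not_red andbT; move: yB; rewrite inE.
Qed.

Lemma contraction_step (d : nat) (H : trigraph T) (p : T -> T) (u v : T) :
  represents H p -> all_small d p -> u \in tv H -> u != v ->
  is_dtrigraph d (contract H u v) ->
  all_small d (merge p u v) \/ homogeneous_pair d.
Proof.
move=> Hp small_p Hu uv Hdeg.
have n_gt0 : 0 < n by apply/card_gt0P; exists u.
case: (boolP (all_small d (merge p u v))) => [|/forallPn[a]]; first by left.
case: (eqVneq a u) => [->|au]; last by rewrite merge_small.
rewrite -leqNgt => large; right.
apply: (homogeneous_pair_of_large_part (represents_contract Hp Hu uv) _ _ large).
- by rewrite /= in_setD1 uv.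
- by apply: Hdeg; rewrite /= in_setD1 uv.
- have := leq_card_setU (part p u) (part p v); rewrite -part_merge_u => [[UV _]].
  have := forallP small_p u; have := forallP small_p v.
  have := leq_mul (leqnn (d + 4)) UV; rewrite mulnDr; lia.
- by move=> b bu; apply: merge_small.
Qed.

(* The final trigraph has a single vertex, so its only part is V(G). *)
Lemma single_vertex_not_all_small (d : nat) (H : trigraph T) (p : T -> T) :
  0 < n -> represents H p -> #|tv H| = 1 -> ~~ all_small d p.
Proof.
move=> n_gt0 [Hin _ _] /eqP/cards1P[a tvH]; apply/forallPn; exists a.
have -> : part p a = setT.
  by apply/setP => x; rewrite !inE; have := Hin x; rewrite tvH inE => ->.
rewrite cardsT -leqNgt; lia.
Qed.

Lemma homogeneous_pair_of_dseq (d d' : nat) :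
  d' <= d -> d + 4 < n -> has_dseq e d' -> homogeneous_pair d.
Proof.
move=> le_d'd n_large [f [f0 f_step f_deg f_last]].
have n_gt0 : 0 < n by lia.
have invariant i : i < n ->
    exists p, represents (f i) p /\ (all_small d p \/ homogeneous_pair d).
  elim: i => [_|i IH lt_in].
    exists id; rewrite f0; split; first exact: represents_graph.
    left; apply/forallP => a; have -> : part id a = [set a].
      by apply/setP => x; rewrite !inE.
    by rewrite cards1 muln1.
  have [p [Hp small_or_found]] := IH (ltnW lt_in).
  have [u [v [Hu _ uv f_next]]] := f_step i ltac:(lia).
  exists (merge p u v); rewrite f_next; split; first exact: represents_contract.
  case: small_or_found => [small_p|]; last by right.
  apply: (contraction_step Hp small_p Hu uv).
  by apply: is_dtrigraph_le le_d'd _; rewrite -f_next; apply: f_deg.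
have [p [Hp [small_p|//]]] := invariant n.-1 ltac:(lia).
by move: small_p; rewrite (negbTE (single_vertex_not_all_small d n_gt0 Hp f_last)).
Qed.

Lemma homogeneous_pair_of_small_graph (d : nat) :
  2 <= n -> n <= d + 4 -> homogeneous_pair d.
Proof.
move=> /card_gt1P[a [b [_ _ ab]]] small_n.
exists [set a], [set b]; split; rewrite ?cards1 ?muln1 //.
  by rewrite disjoints1 inE.
by case: (boolP (e a b)) => h; [left | right] => x y; rewrite !inE => /eqP -> /eqP ->.
Qed.

End Partitions.

Theorem mainTheorem11 (T : finType) (e : rel T) (d : nat) :
  symmetric e -> irreflexive e ->
  2 <= #|T| ->
  tww_le e d ->
  exists X Y : {set T},
    [/\ [disjoint X & Y],
        #|T| <= (d + 4) * #|X|,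
        #|T| <= (d + 4) * #|Y| &
        (forall x y, x \in X -> y \in Y -> e x y) \/
        (forall x y, x \in X -> y \in Y -> ~~ e x y)].
Proof.
move=> e_sym _ n_ge2 [d' [le_d'd has_seq]].
case: (leqP #|T| (d + 4)) => n_large.
- exact: homogeneous_pair_of_small_graph.
- exact: (homogeneous_pair_of_dseq e_sym le_d'd n_large has_seq).
Qed.
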